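(* Let $G$ be a graph and let $C_1,C_2$ be two different simple cycles in $G$ that are not edge-disjoint (i.e. $E(C_1)\cap E(C_2)\neq\emptyset$). If $G$ does not contain any removable cycle of length at most $|C_1|+|C_2|$, then $G[V(C_1)\cup V(C_2)]$ is isomorphic to a complete graph.
   Context: A simple cycle in a graph $G$ is a sequence $(v_1,\dots,v_k)$ of $k>2$ distinct vertices with $\{v_i,v_{i+1}\}\in E(G)$ for $1\le i<k$ and $\{v_k,v_1\}\in E(G)$; $V(C)$ and $E(C)$ are its vertex and edge sets, and its length $|C|$ is $|V(C)|$. Two cycles are different if they are not the same cycle (their edge sets differ). $G[U]$ is the induced subgraph on $U$. A simple cycle $C$ in $G$ is removable if $G[V(C)]$ is neither isomorphic to a complete graph nor to a cycle graph of odd length. *)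

From mathcomp Require Import all_boot.
Set Implicit Arguments. Unset Strict Implicit. Unset Printing Implicit Defensive.

Section Graphs.
Variable T : finType.
Variable e : rel T.

Definition simple_graph : Prop := symmetric e /\ irreflexive e.

(* A simple cycle (v_1,...,v_k): k > 2 distinct vertices, consecutive ones
   adjacent, and v_k adjacent to v_1.  [cycle e c] is exactly
   path e v1 [:: v2; ...; vk; v1]. *)
Definition simple_cycle (c : seq T) : bool :=
  [&& 2 < size c, uniq c & cycle e c].

Definition cverts (c : seq T) : {set T} := [set x | x \in c].

Definition cedges (c : seq T) : {set {set T}} :=
  [set [set x; next c x] | x in c].

Definition clen (c : seq T) : nat := #|cverts c|.

(* G[U] is isomorphic to a complete graph: any two distinct vertices of U
   are adjacent. *)
Definition induced_complete (U : {set T}) : Prop :=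
  forall x y, x \in U -> y \in U -> x != y -> e x y.

(* G[U] is isomorphic to a cycle graph C_n of odd length n (n >= 3):
   there is a cyclic enumeration s of U (an explicit bijection with Z_n)
   such that two vertices of U are adjacent in G iff they are cyclically
   consecutive in s. *)
Definition induced_odd_cycle (U : {set T}) : Prop :=
  exists s : seq T,
    [/\ uniq s, s =i U, 2 < size s, odd (size s) &
        forall x y, x \in s -> y \in s ->
          e x y = (y == next s x) || (x == next s y)].

Definition removable (c : seq T) : Prop :=
  simple_cycle c /\
  ~ induced_complete (cverts c) /\ ~ induced_odd_cycle (cverts c).

End Graphs.

(* Call a simple cycle short if its length is at most L = |C1| + |C2|.  By
   hypothesis a short cycle that is not a clique is an induced odd cycle, of
   length at least 5: an odd hole.  Suppose C1 is not a clique, so it is an odd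
   hole.  If V(C2) is contained in V(C1), every edge of C2 is an edge of the
   chordless cycle C1, which forces E(C2) = E(C1).  Otherwise C2 leaves C1
   along an ear from x to z.  As |C1| is odd, closing the ear along one of the
   two arcs of C1 between x and z gives a short even cycle, which must be a
   clique: if that arc has an interior vertex, this clique contains a chord of
   C1; if not, the first ear vertex is adjacent to both x and z and is itself
   an ear, whose even closure has a chord.  Hence C1 and symmetrically C2 are
   cliques sharing an edge ab, and for x in C1 - C2 and y in C2 - C1 the short
   even 4-cycle x a y b is a clique, so xy is an edge. *)

From mathcomp Require Import all_boot zify.
From Stdlib Require Import Classical.
Set Implicit Arguments. Unset Strict Implicit. Unset Printing Implicit Defensive.

Section Sequences.
Variable T : eqType.
Implicit Types (s : seq T) (P : pred T).

Lemma next_neq_prev s x : uniq s -> 2 < size s -> x \in s -> next s x != prev s x.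
Proof.
move=> us s3 sx; have [i t Et] := rot_to sx.
rewrite -(next_rot i us) -(prev_rot i us) Et.
have : 2 < size (x :: t) by rewrite -Et size_rot.
have : uniq (x :: t) by rewrite -Et rot_uniq.
case: t {Et} => [|y [|z t]] // uxt _; apply/eqP => Exy.
have := next_prev uxt x; rewrite -Exy /= eqxx.
move: uxt => /= /and3P[]; rewrite !inE !negb_or => /and3P[nxy nxz _] _ _.
by rewrite eq_sym (negbTE nxy) eqxx => Ezx; rewrite Ezx eqxx in nxz.
Qed.

Lemma rev_arcs (x z : T) p1 p2 :
  rotr 1 (rev (x :: p1 ++ z :: p2)) = x :: rev p2 ++ z :: rev p1.
Proof. by rewrite rev_cons rev_cat rev_cons cat_rcons -rot1_cons rotK. Qed.

Lemma rot_to_excursion P s u v :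
  u \in s -> v \in s -> u != v -> P u -> P v -> ~~ all P s ->
  exists i x y q z r,
    [/\ rot i s = x :: (y :: q) ++ z :: r, P x, P z & ~~ has P (y :: q)].
Proof.
move=> su sv nuv Pu Pv; case/allPn => w sw nPw.
have [i t Et] := rot_to su.
have tw : has (predC P) t.
  apply/hasP; exists w => //; move: sw; rewrite -(mem_rot i) Et inE.
  by case/orP => // /eqP Ewu; rewrite Ewu Pu in nPw.
(* y is the first vertex outside P after u, x the vertex before it, and z
   will be the first vertex of P after y. *)
case/split_find: tw Et => y t1 t2 nPy /hasPn Pt1.
have Px : P (last u t1).
  have := mem_last u t1; rewrite inE => /orP[/eqP->//|]; move/Pt1 => /=.
  by rewrite negbK.
rewrite cat_rcons -cat_cons (lastI u t1) cat_rcons => Et.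
set x := last u t1 in Px Et *; set b := belast u t1 in Et *.
have Ex : rot (size b) (rot i s) = x :: y :: t2 ++ b by rewrite Et rot_size_cat.
have [w' [sw' Pw' nw'x]] : exists w', [/\ w' \in s, P w' & w' != x].
  by case: (eqVneq v x) => [Evx|]; [exists u; rewrite -Evx | exists v].
have hw : has P (y :: t2 ++ b).
  apply/hasP; exists w' => //.
  by move: sw'; rewrite -(mem_rot i) -(mem_rot (size b)) Ex inE (negbTE nw'x).
move: hw Ex; move Eyb: (y :: t2 ++ b) => l hw Ex.
case/split_find: hw Eyb Ex => z [|y' q] r Pz nPq [Ey _] Ex.
  by move: nPy; rewrite Ey /= Pz.
exists (rot_add s i (size b)), x, y', q, z, r.
by rewrite -rot_rot_add Ex cat_rcons.
Qed.

End Sequences.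

Section Graph.
Variables (T : finType) (e : rel T).
Hypothesis sym_e : symmetric e.
Implicit Types (c : seq T) (U : {set T}).

Definition nbhd U x : {set T} := [set y in U | e x y].

(* On the vertex set of a simple cycle this says the cycle is chordless; it is
   phrased on vertex sets so that it survives rotation and reversal. *)
Definition maxdeg_le2 U : Prop := forall x, x \in U -> #|nbhd U x| <= 2.

Definition odd_hole c : Prop :=
  [/\ simple_cycle e c, 4 < size c, odd (size c) & maxdeg_le2 (cverts c)].

Definition ear c x q z : Prop :=
  [/\ uniq q, path e x (rcons q z) & ~~ has [in c] q].

Lemma in_cverts c x : (x \in cverts c) = (x \in c).
Proof. by rewrite inE. Qed.

Lemma in_nbhd U x y : (y \in nbhd U x) = (y \in U) && e x y.
Proof. by rewrite inE. Qed.

Lemma clen_uniq c : uniq c -> clen c = size c.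
Proof. by move=> uc; rewrite /clen /cverts cardsE; apply/card_uniqP. Qed.

Lemma cverts_eq_mem c c' : c =i c' -> cverts c = cverts c'.
Proof. by move=> E; apply/setP => x; rewrite !in_cverts. Qed.

Lemma mem_cedges c E x : E \in cedges c -> x \in E -> x \in c.
Proof. by case/imsetP=> y yc -> /set2P[]->; rewrite ?mem_next. Qed.

Lemma eq_ear c c' x q z : c =i c' -> ear c x q z -> ear c' x q z.
Proof. by move=> E [uq pq hq]; split; rewrite // has_sym -(eq_has_r E) has_sym. Qed.

Lemma maxdeg_le2_nbhd U x y1 y2 : maxdeg_le2 U -> x \in U ->
  y1 \in nbhd U x -> y2 \in nbhd U x -> y1 != y2 -> nbhd U x = [set y1; y2].
Proof.
move=> dU xU y1N y2N ny; apply/esym/eqP; rewrite eqEcard cards2 ny dU // andbT.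
by apply/subsetP => y /set2P[]->.
Qed.

Lemma cycle_nbrs_nbhd c x : cycle e c -> x \in c ->
  [set next c x; prev c x] \subset nbhd (cverts c) x.
Proof.
move=> cc xc; apply/subsetP => y; rewrite !inE => /orP[]/eqP->.
  by rewrite mem_next xc next_cycle.
by rewrite mem_prev xc sym_e prev_cycle.
Qed.

Lemma simple_cycle_rot n c : simple_cycle e c -> simple_cycle e (rot n c).
Proof. by case/and3P=> c3 uc cc; rewrite /simple_cycle size_rot rot_uniq rot_cycle c3 uc. Qed.

Lemma simple_cycle_rev c : simple_cycle e c -> simple_cycle e (rev c).
Proof.
case/and3P=> c3 uc cc; rewrite /simple_cycle size_rev rev_uniq rev_cycle c3 uc.
by rewrite (eq_cycle (e' := e)) // => x y; rewrite sym_e.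
Qed.

Lemma odd_hole_rot n c : odd_hole c -> odd_hole (rot n c).
Proof.
case=> sc c5 oc dc; split; rewrite ?size_rot ?simple_cycle_rot //.
by rewrite (cverts_eq_mem (mem_rot n c)).
Qed.

Lemma odd_hole_rev c : odd_hole c -> odd_hole (rev c).
Proof.
case=> sc c5 oc dc; split; rewrite ?size_rev ?simple_cycle_rev //.
by rewrite (cverts_eq_mem (mem_rev c)).
Qed.

Lemma odd_hole_rev_arcs x p1 z p2 : odd_hole (x :: p1 ++ z :: p2) ->
  odd_hole (x :: rev p2 ++ z :: rev p1).
Proof. by move=> hc; rewrite -rev_arcs; apply/odd_hole_rot/odd_hole_rev. Qed.

Lemma mem_rev_arcs (x z : T) p1 p2 :
  x :: rev p2 ++ z :: rev p1 =i x :: p1 ++ z :: p2.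
Proof. by move=> w; rewrite -rev_arcs mem_rotr mem_rev. Qed.

Lemma size_rev_arcs (x z : T) p1 p2 :
  size (x :: rev p2 ++ z :: rev p1) = size (x :: p1 ++ z :: p2).
Proof. by rewrite -rev_arcs size_rotr size_rev. Qed.

Lemma triangle_complete c : simple_cycle e c -> size c = 3 ->
  induced_complete e (cverts c).
Proof.
case/and3P=> _ _; case: c => [|a [|b [|d []]]] //= cc _ x y.
rewrite !in_cverts !inE; move: cc; rewrite !andbT => /and3P[eab ebd eda].
by move=> /or3P[]/eqP-> /or3P[]/eqP->; rewrite ?eqxx // => _; rewrite // sym_e.
Qed.

Lemma hole_no_chord z a b r : odd_hole (z :: a :: b :: r) -> ~~ e z b.
Proof.
case=> /and3P[_ uc cc] c5 _ dc; case: r c5 uc cc dc => [|w r] // _ uc cc dc.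
have := cc; rewrite /= rcons_path => /and5P[eza _ _ _ elz].
set c := [:: z, a, b, w & r] in uc cc dc *; set l := last w r in elz *.
move: uc => /= /and4P[_ an bn _].
have lw : l \in w :: r by apply: mem_last.
have zN y : y \in c -> e z y -> y \in nbhd (cverts c) z.
  by move=> yc ezy; rewrite in_nbhd in_cverts yc.
have Nz : nbhd (cverts c) z = [set a; l].
  apply: maxdeg_le2_nbhd; first exact: dc.
  - by rewrite in_cverts mem_head.
  - by apply: zN; rewrite // !inE eqxx orbT.
  - by apply: zN; rewrite 1?sym_e // 3!in_cons lw !orbT.
  - by apply: contraNneq an => ->; rewrite in_cons lw orbT.
apply/negP => ezb; have := zN b; rewrite Nz !inE eqxx !orbT => /(_ isT ezb).
by case/orP=> /eqP Eb; [move: an | move: bn]; rewrite Eb ?lw ?inE ?eqxx.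
Qed.

Lemma cedges_prev c x : uniq c -> x \in c -> [set x; prev c x] \in cedges c.
Proof.
by move=> uc xc; rewrite -{1}(next_prev uc x) setUC; apply: imset_f; rewrite mem_prev.
Qed.

Lemma sub_cedges c c' : uniq c' -> {subset c <= c'} ->
  {in c, forall x, next c x \in [set next c' x; prev c' x]} ->
  cedges c \subset cedges c'.
Proof.
move=> uc' sub nbr; apply/subsetP => _ /imsetP[x xc ->].
have xc' := sub x xc.
by case/set2P: (nbr x xc) => ->; [apply: imset_f | apply: cedges_prev].
Qed.

Lemma maxdeg_le2_subcycle_cedges c1 c2 : simple_cycle e c1 -> maxdeg_le2 (cverts c1) ->
  simple_cycle e c2 -> {subset c2 <= c1} -> cedges c1 = cedges c2.
Proof.
move=> /and3P[c1_3 uc1 cc1] dc1 /and3P[c2_3 uc2 cc2] sub21.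
have nbrs x : x \in c2 -> [set next c2 x; prev c2 x] = [set next c1 x; prev c1 x].
  move=> x2; have x1 := sub21 x x2; apply/eqP; rewrite eqEcard.
  rewrite !cards2 !next_neq_prev // andbT.
  have sub_nbhd : nbhd (cverts c2) x \subset nbhd (cverts c1) x.
    by apply/subsetP => y; rewrite !inE => /andP[/sub21-> ->].
  apply: subset_trans (cycle_nbrs_nbhd cc2 x2) (subset_trans sub_nbhd _).
  rewrite (@maxdeg_le2_nbhd _ _ (next c1 x) (prev c1 x)) ?in_cverts ?next_neq_prev //.
  - by apply/(subsetP (cycle_nbrs_nbhd cc1 x1)); rewrite !inE eqxx.
  - by apply/(subsetP (cycle_nbrs_nbhd cc1 x1)); rewrite !inE eqxx orbT.
have closed2 x : x \in c2 -> next c1 x \in c2.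
  move=> x2; have : next c1 x \in [set next c2 x; prev c2 x] by rewrite nbrs // !inE eqxx.
  by case/set2P=> ->; rewrite ?mem_next ?mem_prev.
have sub12 : {subset c1 <= c2}.
  move=> y y1; set u := nth y c2 0.
  have u2 : u \in c2 by rewrite mem_nth // ltnW // ltnW.
  have := fconnect_cycle (cycle_next uc1) (sub21 u u2) y; rewrite y1.
  case/connectP => p pp ->; elim: p u u2 pp => [|w p IHp] u u2 //= /andP[/eqP <-].
  exact/IHp/closed2.
apply/eqP; rewrite eqEsubset !sub_cedges // => x xc.
  by rewrite -nbrs // set21.
by rewrite nbrs ?sub12 // set21.
Qed.

Lemma cycle_prefix_path x s z r : cycle e (x :: s ++ z :: r) -> path e x (rcons s z).
Proof.
rewrite /= rcons_cat cat_path => /andP[ps /= /andP[elz _]].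
by rewrite rcons_path ps.
Qed.

Lemma ear_simple_cycle x p1 z p2 y q :
  cycle e (x :: p1 ++ z :: p2) -> uniq (x :: p1 ++ z :: p2) ->
  ear (x :: p1 ++ z :: p2) x (y :: q) z ->
  simple_cycle e ((y :: q) ++ z :: rcons p2 x).
Proof.
move=> cc uc [uq pq hq].
have Erot : rot (size (x :: p1)) (x :: p1 ++ z :: p2) = (z :: rcons p2 x) ++ p1.
  by rewrite rot_size_cat /= cat_rcons.
have arc_c : {subset z :: rcons p2 x <= x :: p1 ++ z :: p2}.
  by move=> w wa; rewrite -(mem_rot (size (x :: p1))) Erot mem_cat wa.
have ua : uniq (z :: rcons p2 x).
  by move: uc; rewrite -(rot_uniq (size (x :: p1))) Erot cat_uniq => /and3P[].
have pa : path e z (rcons p2 x).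
  by move: cc; rewrite /= rcons_cat cat_path => /andP[_ /= /andP[]].
apply/and3P; split.
- by rewrite size_cat /= size_rcons addSn !addnS.
- rewrite cat_uniq uq ua andbT has_sym; apply: contra hq.
  by apply: sub_has => w /arc_c.
- rewrite -rcons_cons -rcons_cat -rot1_cons rot_cycle /cycle rcons_cat.
  by rewrite rcons_cons -cat_rcons cat_path pq last_rcons.
Qed.

Section ShortCycles.
Variable L : nat.
Hypothesis long_removable : forall c, removable e c -> L < clen c.

Lemma short_noncomplete_cycle c : simple_cycle e c -> clen c <= L ->
  ~ induced_complete e (cverts c) -> odd (size c) /\ maxdeg_le2 (cverts c).
Proof.
move=> sc cL nK.
have [s [us sc' _ os adj]] : induced_odd_cycle e (cverts c).
  apply: NNPP => nO; have := long_removable (conj sc (conj nK nO)).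
  by rewrite ltnNge cL.
have size_s : size s = size c.
  by rewrite -(card_uniqP us) (eq_card sc') -clen_uniq //; case/and3P: sc.
split=> [|x xc]; first by rewrite -size_s.
have xs : x \in s by rewrite sc'.
apply: leq_trans (_ : #|[set next s x; prev s x]| <= 2); last first.
  by rewrite cards2 ltnS leq_b1.
apply/subset_leq_card/subsetP => y; rewrite in_nbhd -sc' => /andP[ys].
by rewrite adj // => /orP[]/eqP->; rewrite ?prev_next ?set21 ?set22.
Qed.

Lemma even_short_cycle_complete c : simple_cycle e c -> clen c <= L ->
  ~~ odd (size c) -> induced_complete e (cverts c).
Proof.
move=> sc cL ev; apply: NNPP => nK.
by have [oc _] := short_noncomplete_cycle sc cL nK; rewrite oc in ev.
Qed.

Lemma short_noncomplete_odd_hole c : simple_cycle e c -> clen c <= L ->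
  ~ induced_complete e (cverts c) -> odd_hole c.
Proof.
move=> sc cL nK; have [oc dc] := short_noncomplete_cycle sc cL nK.
split=> //; have /and3P[c3 _ _] := sc.
have c_ne3 : size c != 3 by apply: contra_notN nK => /eqP/(triangle_complete sc).
by move: c3 c_ne3 oc; case: (size c) => [|[|[|[|[]]]]].
Qed.

Lemma even_ear_arc_nil x p1 z p2 y q :
  odd_hole (x :: p1 ++ z :: p2) -> ear (x :: p1 ++ z :: p2) x (y :: q) z ->
  size (y :: q) + size (x :: p1 ++ z :: p2) <= L ->
  ~~ odd (size (y :: q) + size p2) -> p2 = [::] /\ e y z.
Proof.
move=> hc eq qL ev; have [/and3P[_ uc cc] _ _ _] := hc.
have sD := ear_simple_cycle cc uc eq.
have KD : induced_complete e (cverts ((y :: q) ++ z :: rcons p2 x)).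
  apply: even_short_cycle_complete => //.
    rewrite clen_uniq; last by case/and3P: sD.
    by move: qL; rewrite /= !size_cat /= size_rcons; lia.
  by move: ev; rewrite size_cat /= size_rcons !addnS /= !negbK.
have yD : y \in cverts ((y :: q) ++ z :: rcons p2 x) by rewrite in_cverts mem_head.
have zD : z \in cverts ((y :: q) ++ z :: rcons p2 x).
  by rewrite in_cverts mem_cat mem_head orbT.
have yc : y \notin x :: p1 ++ z :: p2 by case: eq => _ _ /hasPn->; rewrite ?mem_head.
case: p2 => [|a p2] in hc eq qL ev uc cc sD KD yD zD yc *.
  split=> //; apply: KD => //; apply: contraNneq yc => ->.
  by rewrite in_cons mem_cat mem_head !orbT.
(* z, a and the next vertex b of c lie in the clique, so zb is a chord of c. *)
exfalso; have [b [r Ebr]] : exists b r, rcons p2 x = b :: r.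
  by case: (p2) => [|b r]; [exists x, [::] | exists b, (rcons r x)].
have hz : odd_hole (z :: a :: b :: r ++ p1).
  by have := odd_hole_rot (size (x :: p1)) hc; rewrite rot_size_cat /= -cat_rcons Ebr.
have nzb : z != b.
  by case: hz => /and3P[_ /= /andP[+ _] _] _ _ _; apply: contraNneq => <-; rewrite !inE eqxx orbT.
move/negP: (hole_no_chord hz); apply; apply: KD => //.
by rewrite in_cverts mem_cat /= Ebr !inE eqxx !orbT.
Qed.

Lemma odd_hole_no_even_ear x p1 z p2 y q :
  odd_hole (x :: p1 ++ z :: p2) -> ear (x :: p1 ++ z :: p2) x (y :: q) z ->
  size (y :: q) + size (x :: p1 ++ z :: p2) <= L ->
  ~~ odd (size (y :: q) + size p2) -> False.
Proof.
move=> hc eq qL ev; have [p2_nil eyz] := even_ear_arc_nil hc eq qL ev; subst p2.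
have [_ c5 oc _] := hc.
have [uq pq yq] := eq.
have yc : y \notin x :: p1 ++ [:: z] by apply: (hasPn yq); rewrite mem_head.
(* The single vertex y is an ear, to be closed along the arc p1, of odd length. *)
have eq1 : ear (x :: rev [::] ++ z :: rev p1) x [:: y] z.
  split=> //; last by apply/hasPn => w; rewrite inE => /eqP->; rewrite mem_rev_arcs.
  by case/andP: pq => /= -> _; rewrite eyz.
have [] := even_ear_arc_nil (odd_hole_rev_arcs hc) eq1.
- by move: qL; rewrite size_rev_arcs /=; lia.
- by move: oc; rewrite /= size_cat /= size_rev addn1 add0n /= !negbK.
move=> /(congr1 size); rewrite size_rev /= => p1_0 _.
by move: c5; rewrite /= size_cat p1_0.
Qed.

Lemma odd_hole_no_short_ear x p1 z p2 y q :
  odd_hole (x :: p1 ++ z :: p2) -> ear (x :: p1 ++ z :: p2) x (y :: q) z ->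
  size (y :: q) + size (x :: p1 ++ z :: p2) <= L -> False.
Proof.
move=> hc eq qL; have [_ _ oc _] := hc.
have [ev | od] := boolP (~~ odd (size (y :: q) + size p2)).
  exact: odd_hole_no_even_ear hc eq qL ev.
apply: (odd_hole_no_even_ear (odd_hole_rev_arcs hc)).
- by apply: eq_ear eq => w; rewrite mem_rev_arcs.
- by rewrite size_rev_arcs.
- move: oc od; rewrite /= size_cat /= size_rev !addnS /= !negbK !oddD.
  by case: (odd (size p1)); case: (odd (size p2)); case: (odd (size q)).
Qed.

Lemma complete_of_shared_pair c1 c2 u v :
  simple_cycle e c1 -> simple_cycle e c2 -> cedges c1 != cedges c2 ->
  size c1 + size c2 <= L -> u != v ->
  u \in c1 -> v \in c1 -> u \in c2 -> v \in c2 -> induced_complete e (cverts c1).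
Proof.
move=> sc1 sc2 ne12 szL nuv u1 v1 u2 v2; apply: NNPP => nK.
have /and3P[_ uc1 _] := sc1; have /and3P[_ uc2 cc2] := sc2.
have hc1 : odd_hole c1.
  by apply: short_noncomplete_odd_hole; rewrite // clen_uniq // (leq_trans (leq_addr _ _) szL).
have [sub21 | nsub] := boolP (all [in c1] c2).
  have [_ _ _ dc1] := hc1.
  by rewrite (maxdeg_le2_subcycle_cedges sc1 dc1 sc2 (allP sub21)) eqxx in ne12.
have [i [x [y [q [z [r [E2 x1 z1 yq]]]]]]] := rot_to_excursion u2 v2 nuv u1 v1 nsub.
have cE : cycle e (x :: (y :: q) ++ z :: r) by rewrite -E2 rot_cycle.
have uE : uniq (x :: (y :: q) ++ z :: r) by rewrite -E2 rot_uniq.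
have nxz : x != z.
  by move: uE => /andP[+ _]; apply: contraNneq => <-; rewrite mem_cat mem_head orbT.
have [j p1 p2 _ _ E1] := rot_to_arc uc1 x1 z1 nxz.
have eq1 : ear c1 x (y :: q) z.
  split; [|exact: cycle_prefix_path cE|exact: yq].
  by move: uE; rewrite cons_uniq cat_uniq => /and4P[].
apply: (@odd_hole_no_short_ear x p1 z p2 y q); rewrite -E1.
- exact: odd_hole_rot.
- by apply: eq_ear eq1 => w; rewrite mem_rot.
- have := congr1 size E2; rewrite size_rot /= size_cat /= => sz2.
  rewrite size_rot; apply: leq_trans szL; rewrite addnC leq_add2l sz2.
  by rewrite ltnS leqW // leq_addr.
Qed.

Lemma cliques_union_complete U1 U2 a b : 3 < L ->
  induced_complete e U1 -> induced_complete e U2 -> a != b ->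
  a \in U1 -> b \in U1 -> a \in U2 -> b \in U2 -> induced_complete e (U1 :|: U2).
Proof.
move=> L4 K1 K2 nab a1 b1 a2 b2.
have cross x y : x \in U1 -> x \notin U2 -> y \in U2 -> y \notin U1 -> e x y.
  move=> x1 x2 y2 y1.
  have nxa : x != a by apply: contraNneq x2 => ->.
  have nxb : x != b by apply: contraNneq x2 => ->.
  have nya : y != a by apply: contraNneq y1 => ->.
  have nyb : y != b by apply: contraNneq y1 => ->.
  have nxy : x != y by apply: contraNneq y1 => <-.
  have sq : simple_cycle e [:: x; a; y; b].
    rewrite /simple_cycle /= !inE !negb_or nxa nxy nxb nab nyb (eq_sym a y) nya /=.
    by rewrite K1 // K2 1?eq_sym // K2 // K1 // eq_sym.
  have Kq : induced_complete e (cverts [:: x; a; y; b]).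
    apply: even_short_cycle_complete => //.
    by rewrite clen_uniq //; case/and3P: sq.
  by apply: Kq; rewrite // in_cverts !inE eqxx ?orbT.
move=> x y /setUP[x1|x2] /setUP[y1|y2] nxy.
- exact: K1.
- have [x2|x2] := boolP (x \in U2); first exact: K2.
  have [y1|y1] := boolP (y \in U1); first exact: K1.
  exact: cross.
- have [y2|y2] := boolP (y \in U2); first exact: K2.
  have [x1|x1] := boolP (x \in U1); first exact: K1.
  by rewrite sym_e; apply: cross.
- exact: K2.
Qed.

End ShortCycles.

End Graph.

Theorem lemma5p1 (T : finType) (e : rel T) (c1 c2 : seq T) :
  simple_graph e ->
  simple_cycle e c1 -> simple_cycle e c2 ->
  cedges c1 != cedges c2 ->
  cedges c1 :&: cedges c2 != set0 ->
  (forall c : seq T, removable e c -> clen c1 + clen c2 < clen c) ->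
  induced_complete e (cverts c1 :|: cverts c2).
Proof.
move=> [sym_e irr_e] sc1 sc2 ne12 /set0Pn[_ /setIP[/imsetP[a a1 ->] ab2]] long.
have /and3P[c1_3 uc1 cc1] := sc1; have /and3P[c2_3 uc2 _] := sc2.
set b := next c1 a in ab2.
have b1 : b \in c1 by rewrite mem_next.
have nab : a != b by apply: contraTneq (next_cycle cc1 a1) => Eb; rewrite -/b -Eb irr_e.
have a2 : a \in c2 by apply: mem_cedges ab2 _; rewrite set21.
have b2 : b \in c2 by apply: mem_cedges ab2 _; rewrite set22.
have szL : size c1 + size c2 <= clen c1 + clen c2 by rewrite !clen_uniq.
have K1 := complete_of_shared_pair sym_e long sc1 sc2 ne12 szL nab a1 b1 a2 b2.
have K2 : induced_complete e (cverts c2).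
  apply: (complete_of_shared_pair sym_e long sc2 sc1 _ _ nab a2 b2 a1 b1).
    by rewrite eq_sym.
  by rewrite addnC.
apply: (cliques_union_complete sym_e long _ K1 K2 nab); rewrite ?in_cverts //.
by rewrite !clen_uniq //; exact: leq_add c1_3 (ltnW (ltnW c2_3)).
Qed.
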